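(* Let $H\subset Y$ be closed and $k\ge1$. Then $\mathcal R_n^f(H,Z,k)$ is open in $C(X,M)$ (with the source limitation topology) in each of the following cases: (i) $Z\subset M$ is closed and $X,Y$ are metric spaces; (ii) $Z=M$ and $X,Y$ are paracompact.
   Context: Let $(M,\rho)$ be a complete metric space, $Z\subset M$ closed, $n\ge0$, and $f\colon X\to Y$ a perfect surjection between paracompact spaces with $\dim f\le n$. For $H\subset Y$ and $k\ge1$, $\mathcal R_n^f(H,Z,k)$ is the set of $g\in C(X,M)$ such that for each $y\in H$ the set $g(f^{-1}(y))\cap Z$ can be covered by a family of open subsets of $M$ of mesh $\le1/k$ and order $\le n$ (every point of $M$ lies in at most $n+1$ members). The source limitation topology on $C(X,M)$ has as neighborhood base at $f$ the sets $\{g:\rho(g(x),f(x))<\varepsilon(x)\ \forall x\in X\}$, $\varepsilon\colon X\to(0,1]$ continuous. *)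

From Stdlib Require Import Reals List.
Open Scope R_scope.

Record TopSpace := {
  carrier :> Type;
  is_open : (carrier -> Prop) -> Prop;
  open_full : is_open (fun _ => True);
  open_inter : forall U V, is_open U -> is_open V -> is_open (fun x => U x /\ V x);
  open_union : forall F : (carrier -> Prop) -> Prop,
      (forall U, F U -> is_open U) -> is_open (fun x => exists U, F U /\ U x)
}.

Definition is_closed (X : TopSpace) (A : X -> Prop) : Prop :=
  is_open X (fun x => ~ A x).

Definition finite_type (I : Type) : Prop := exists l : list I, forall i, In i l.

(* "order <= n" on A : no point of A lies in n+2 distinct members of the family *)
Definition order_le {T I : Type} (U : I -> T -> Prop) (A : T -> Prop) (n : nat) : Prop :=
  forall js : list I, NoDup js -> length js = S (S n) ->
    forall x, A x -> exists j, In j js /\ ~ U j x.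

Definition compact_subset (X : TopSpace) (A : X -> Prop) : Prop :=
  forall (I : Type) (U : I -> X -> Prop), (forall i, is_open X (U i)) ->
    (forall x, A x -> exists i, U i x) ->
    exists l : list I, forall x, A x -> exists i, In i l /\ U i x.

(* covering dimension of the subspace A of X is <= n (Cech-Lebesgue):
   every finite cover of A by (traces of) open sets has a finite open
   refinement (on A) of order <= n *)
Definition covdim_le (X : TopSpace) (A : X -> Prop) (n : nat) : Prop :=
  forall (I : Type) (U : I -> X -> Prop), finite_type I ->
    (forall i, is_open X (U i)) -> (forall x, A x -> exists i, U i x) ->
    exists (J : Type) (V : J -> X -> Prop),
      finite_type J /\ (forall j, is_open X (V j)) /\
      (forall x, A x -> exists j, V j x) /\
      (forall j, exists i, forall x, A x -> V j x -> U i x) /\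
      order_le V A n.

Definition hausdorff (X : TopSpace) : Prop :=
  forall x y : X, x <> y -> exists U V, is_open X U /\ is_open X V /\ U x /\ V y /\
    forall z, ~ (U z /\ V z).

Definition paracompact (X : TopSpace) : Prop :=
  hausdorff X /\
  forall (I : Type) (U : I -> X -> Prop), (forall i, is_open X (U i)) ->
    (forall x, exists i, U i x) ->
    exists (J : Type) (V : J -> X -> Prop),
      (forall j, is_open X (V j)) /\ (forall x, exists j, V j x) /\
      (forall j, exists i, forall x, V j x -> U i x) /\
      (forall x, exists W, is_open X W /\ W x /\
         exists l : list J, forall j, (exists z, W z /\ V j z) -> In j l).

Definition continuous (X Y : TopSpace) (f : X -> Y) : Prop :=
  forall V, is_open Y V -> is_open X (fun x => V (f x)).

Definition closed_map (X Y : TopSpace) (f : X -> Y) : Prop :=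
  forall A, is_closed X A -> is_closed Y (fun y => exists x, A x /\ f x = y).

Definition perfect_map (X Y : TopSpace) (f : X -> Y) : Prop :=
  continuous X Y f /\ closed_map X Y f /\
  forall y, compact_subset X (fun x => f x = y).

Definition dim_map_le (X Y : TopSpace) (f : X -> Y) (n : nat) : Prop :=
  forall y, covdim_le X (fun x => f x = y) n.

Definition is_metric {T : Type} (d : T -> T -> R) : Prop :=
  (forall x y, 0 <= d x y) /\ (forall x y, d x y = 0 <-> x = y) /\
  (forall x y, d x y = d y x) /\ (forall x y z, d x z <= d x y + d y z).

Definition metric_open {T : Type} (d : T -> T -> R) (U : T -> Prop) : Prop :=
  forall x, U x -> exists r, 0 < r /\ forall y, d x y < r -> U y.

Definition metrizable (X : TopSpace) : Prop :=
  exists d : X -> X -> R, is_metric d /\ forall U, is_open X U <-> metric_open d U.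

Record MetricSpace := {
  mcarrier :> Type;
  dist : mcarrier -> mcarrier -> R;
  dist_metric : is_metric dist
}.

Definition complete (M : MetricSpace) : Prop :=
  forall u : nat -> M,
    (forall eps, 0 < eps -> exists N, forall p q, (p >= N)%nat -> (q >= N)%nat ->
        dist M (u p) (u q) < eps) ->
    exists l, forall eps, 0 < eps -> exists N, forall p, (p >= N)%nat -> dist M (u p) l < eps.

Definition mopen (M : MetricSpace) (U : M -> Prop) : Prop := metric_open (dist M) U.
Definition mclosed (M : MetricSpace) (A : M -> Prop) : Prop := mopen M (fun p => ~ A p).

Definition mcontinuous (X : TopSpace) (M : MetricSpace) (g : X -> M) : Prop :=
  forall U, mopen M U -> is_open X (fun x => U (g x)).

Definition rcontinuous (X : TopSpace) (e : X -> R) : Prop :=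
  forall U, metric_open (fun a b => Rabs (a - b)) U -> is_open X (fun x => U (e x)).

Definition Rnf (X Y : TopSpace) (M : MetricSpace) (f : X -> Y) (n : nat)
    (H : Y -> Prop) (Z : M -> Prop) (k : nat) (g : X -> M) : Prop :=
  mcontinuous X M g /\
  forall y, H y ->
    exists (I : Type) (V : I -> M -> Prop),
      (forall i, mopen M (V i)) /\
      (forall x, f x = y -> Z (g x) -> exists i, V i (g x)) /\
      (forall i a b, V i a -> V i b -> dist M a b <= 1 / INR k) /\
      order_le V (fun _ => True) n.

Definition sl_open (X : TopSpace) (M : MetricSpace) (S : (X -> M) -> Prop) : Prop :=
  forall g, S g -> mcontinuous X M g ->
    exists eps : X -> R, rcontinuous X eps /\ (forall x, 0 < eps x <= 1) /\
      forall h, mcontinuous X M h -> (forall x, dist M (h x) (g x) < eps x) -> S h.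

(* Fix [g] in [Rnf] and [y] in [H].  The finite-order cover of [Z] that the definition provides
   over the fibre [f^-1 y] is open and the fibre is compact, so the cover still contains every point
   of [Z] within some uniform distance [d] of [g] on the fibre, and since [f] is closed the same [d]
   works on all fibres over a neighbourhood of [y].  Points outside the closed set [H] impose no
   condition.  Paracompactness of [Y] (shrinkings and Urysohn functions) turns these local margins
   into a continuous [eps : Y -> (0, 1]], and every [h] that is [eps o f]-close to [g] lies in
   [Rnf]. *)

From Pilot Require Import Defs.
From Stdlib Require Import Reals ZArith List Lra Lia Classical FunctionalExtensionality PropExtensionality ClassicalEpsilon.
Open Scope R_scope.

Lemma choice_fun {A B : Type} (P : A -> B -> Prop) :
  (forall a, exists b, P a b) -> exists f : A -> B, forall a, P a (f a).
Proof.
  intro H. exists (fun a => proj1_sig (constructive_indefinite_description _ (H a))).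
  intro a. exact (proj2_sig (constructive_indefinite_description _ (H a))).
Qed.

Section OpenSets.
Variable Y : TopSpace.

Lemma open_ext (P Q : Y -> Prop) : (forall x, P x <-> Q x) -> is_open Y P -> is_open Y Q.
Proof.
  intros HPQ HP. replace Q with P; [exact HP|].
  apply functional_extensionality; intro x. apply propositional_extensionality, HPQ.
Qed.

Lemma open_Union (K : Type) (S : K -> Y -> Prop) :
  (forall k, is_open Y (S k)) -> is_open Y (fun z => exists k, S k z).
Proof.
  intro HS.
  apply (open_ext (fun x => exists U, (exists k, U = S k) /\ U x)).
  - intro x; split.
    + intros [U [[k ->] Hx]]. exists k; exact Hx.
    + intros [k Hk]. exists (S k). split; [exists k; reflexivity | exact Hk].
  - apply open_union. intros U [k ->]. apply HS.
Qed.

Lemma open_empty : is_open Y (fun _ => False).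
Proof.
  apply (open_ext (fun z => exists k : False, True)); [intro; split; intros []; auto|].
  apply open_Union. intros [].
Qed.

Lemma open_local (P : Y -> Prop) :
  (forall y, P y -> exists N, is_open Y N /\ N y /\ forall z, N z -> P z) -> is_open Y P.
Proof.
  intro HP.
  apply (open_ext (fun x => exists U, (is_open Y U /\ forall z, U z -> P z) /\ U x)).
  - intro x; split.
    + intros [U [[_ HU] Hx]]. exact (HU x Hx).
    + intro Hx. destruct (HP x Hx) as [N [HN [Nx HNP]]]. exists N. auto.
  - apply open_union. intros U [HU _]. exact HU.
Qed.

Lemma open_if (P : Prop) (S : Y -> Prop) : is_open Y S -> is_open Y (fun z => P /\ S z).
Proof.
  intro HS. destruct (classic P) as [HP | HP].
  - apply (open_ext S); [intro x; tauto | exact HS].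
  - apply (open_ext (fun _ => False)); [intro x; tauto | apply open_empty].
Qed.

Lemma open_Inter_list (K : Type) (l : list K) (S : K -> Y -> Prop) :
  (forall k, In k l -> is_open Y (S k)) -> is_open Y (fun z => forall k, In k l -> S k z).
Proof.
  induction l as [|a l IH]; intro HS.
  - apply (open_ext (fun _ => True)); [intro x; simpl; tauto | apply open_full].
  - apply (open_ext (fun z => S a z /\ (forall k, In k l -> S k z))).
    + intro x; simpl; split.
      * intros [Ha Hl] k [<- | Hk]; auto.
      * intro Hx. auto.
    + apply open_inter; [apply HS; left; reflexivity|].
      apply IH; intros k Hk; apply HS; right; exact Hk.
Qed.

Lemma closed_full : is_closed Y (fun _ => True).
Proof. apply (open_ext (fun _ => False)); [intro; tauto | apply open_empty]. Qed.

Lemma closed_compl (E : Y -> Prop) : is_open Y E -> is_closed Y (fun z => ~ E z).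
Proof. intro HE. apply (open_ext E); [intro x; tauto | exact HE]. Qed.

Lemma closed_if (P : Prop) (S : Y -> Prop) : is_closed Y S -> is_closed Y (fun z => P /\ S z).
Proof.
  intro HS. destruct (classic P) as [HP | HP].
  - apply (open_ext (fun z => ~ S z)); [intro x; tauto | exact HS].
  - apply (open_ext (fun _ => True)); [intro x; tauto | apply open_full].
Qed.

Definition closure (Q : Y -> Prop) (z : Y) : Prop :=
  forall O, is_open Y O -> O z -> exists w, O w /\ Q w.

Lemma closure_closed (Q : Y -> Prop) : is_closed Y (closure Q).
Proof.
  apply open_local. intros y Hy.
  apply not_all_ex_not in Hy as [O HO].
  assert (HOo : is_open Y O) by tauto. assert (Oy : O y) by tauto.
  exists O. split; [exact HOo|]. split; [exact Oy|].
  intros z Oz Hz. apply HO. intros _ _. exact (Hz O HOo Oz).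
Qed.

Lemma subset_closure (Q : Y -> Prop) z : Q z -> closure Q z.
Proof. intros Hz O _ Oz. exists z; auto. Qed.

Lemma closure_min (Q D : Y -> Prop) :
  is_closed Y D -> (forall z, Q z -> D z) -> forall z, closure Q z -> D z.
Proof.
  intros HD HQ z Hz. apply NNPP. intro nD.
  destruct (Hz _ HD nD) as [w [nDw Qw]]. apply nDw, HQ, Qw.
Qed.

Lemma locally_finite_Union_closed (K : Type) (C : K -> Y -> Prop) :
  (forall k, is_closed Y (C k)) ->
  (forall y, exists Q, is_open Y Q /\ Q y /\ exists l : list K,
      forall k, (exists z, Q z /\ C k z) -> In k l) ->
  is_closed Y (fun z => exists k, C k z).
Proof.
  intros HC Hlf. apply open_local. intros y Hy.
  destruct (Hlf y) as [Q [HQ [Qy [l Hl]]]].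
  exists (fun z => Q z /\ forall k, In k l -> ~ C k z). split; [|split].
  - apply open_inter; [exact HQ|]. apply open_Inter_list. intros k _. apply HC.
  - split; [exact Qy|]. intros k _ Hk. apply Hy. exists k; exact Hk.
  - intros z [Qz Hz] [k Hk]. apply (Hz k); [apply Hl; exists z; auto | exact Hk].
Qed.

End OpenSets.

(** * Paracompact spaces are normal *)

Section Paracompact.
Variable Y : TopSpace.
Hypothesis HY : paracompact Y.

(* Separate [A] from each point of [B], refine that cover of [B] locally finitely, and thicken
   [A] avoiding the finitely many refining sets met near each of its points. *)
Lemma paracompact_separation (A B : Y -> Prop) :
  is_closed Y B ->
  (forall b, B b -> exists U V, is_open Y U /\ is_open Y V /\ U b /\
       (forall a, A a -> V a) /\ (forall z, U z -> V z -> False)) ->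
  exists N E, is_open Y N /\ is_open Y E /\ (forall a, A a -> N a) /\
    (forall b, B b -> E b) /\ (forall z, N z -> E z -> False).
Proof.
  intros HB Hsep.
  assert (Hpt : forall b : {b | B b}, exists UV : (Y -> Prop) * (Y -> Prop),
      is_open Y (fst UV) /\ is_open Y (snd UV) /\ fst UV (proj1_sig b) /\
      (forall a, A a -> snd UV a) /\ (forall z, fst UV z -> snd UV z -> False)).
  { intros [b Bb]. destruct (Hsep b Bb) as [U [V HUV]]. exists (U, V). exact HUV. }
  destruct (choice_fun _ Hpt) as [uv Huv].
  set (cover := fun i : option {b | B b} =>
                  match i with Some b => fst (uv b) | None => fun z => ~ B z end).
  destruct (proj2 HY _ cover) as [J [R [HRo [HRc [HRr HRl]]]]].
  { intros [b|]; simpl; [apply Huv | exact HB]. }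
  { intro z. destruct (classic (B z)) as [Bz | nBz].
    - exists (Some (exist _ z Bz)). apply Huv.
    - exists None. exact nBz. }
  destruct (choice_fun _ HRr) as [rho Hrho].
  set (E := fun z => exists j, rho j <> None /\ R j z).
  exists (fun z => exists O, is_open Y O /\ O z /\ forall w, O w -> ~ E w), E.
  split; [|split; [|split; [|split]]].
  - apply open_local. intros z [O [HO [Oz HOE]]]. exists O. split; [exact HO|].
    split; [exact Oz|]. intros w Ow. exists O. auto.
  - apply open_Union. intro j. apply open_if, HRo.
  - intros a Aa. destruct (HRl a) as [Q [HQ [Qa [l Hl]]]].
    set (guard := fun j => match rho j with Some b => snd (uv b) | None => fun _ : Y => True end).
    assert (Hguard : forall j, is_open Y (guard j) /\ guard j a).
    { intro j. unfold guard. destruct (rho j) as [b|]; [|split; [apply open_full | exact I]].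
      split; apply Huv; exact Aa. }
    exists (fun z => Q z /\ forall j, In j l -> guard j z). split; [|split].
    + apply open_inter; [exact HQ|]. apply open_Inter_list. intros j _. apply Hguard.
    + split; [exact Qa|]. intros j _. apply Hguard.
    + intros w [Qw Hw] [j [Hj Rw]].
      specialize (Hw j (Hl j (ex_intro _ w (conj Qw Rw)))). specialize (Hrho j w Rw).
      unfold guard in Hw. destruct (rho j) as [b|]; [|contradiction].
      exact (proj2 (proj2 (proj2 (proj2 (Huv b)))) w Hrho Hw).
  - intros b Bb. destruct (HRc b) as [j Hj]. exists j. split; [|exact Hj].
    specialize (Hrho j b Hj). destruct (rho j); [discriminate | contradiction].
  - intros z [O [_ [Oz HOE]]] Ez. exact (HOE z Oz Ez).
Qed.

Lemma paracompact_regular (W : Y -> Prop) (y : Y) : is_open Y W -> W y ->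
  exists N D, is_open Y N /\ is_closed Y D /\ N y /\
    (forall z, N z -> D z) /\ (forall z, D z -> W z).
Proof.
  intros HW Wy.
  destruct (paracompact_separation (fun z => z = y) (fun z => ~ W z))
    as [N [E [HN [HE [HA [HB Hd]]]]]].
  - apply closed_compl, HW.
  - intros b nWb. assert (Hby : b <> y) by (intros ->; contradiction).
    destruct (proj1 HY b y Hby) as [U [V [HU [HV [Ub [Vy HUV]]]]]].
    exists U, V. repeat split; auto.
    + intros a ->. exact Vy.
    + intros z Uz Vz. exact (HUV z (conj Uz Vz)).
  - exists N, (fun z => ~ E z). repeat split.
    + exact HN.
    + apply closed_compl, HE.
    + apply HA. reflexivity.
    + intros z Nz Ez. exact (Hd z Nz Ez).
    + intros z nE. apply NNPP. intro nW. exact (nE (HB z nW)).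
Qed.

Lemma paracompact_normal (C W : Y -> Prop) :
  is_closed Y C -> is_open Y W -> (forall z, C z -> W z) ->
  exists U D, is_open Y U /\ is_closed Y D /\ (forall z, C z -> U z) /\
    (forall z, U z -> D z) /\ (forall z, D z -> W z).
Proof.
  intros HC HW HCW.
  destruct (paracompact_separation C (fun z => ~ W z)) as [N [E [HN [HE [HA [HB Hd]]]]]].
  - apply closed_compl, HW.
  - intros b nWb.
    destruct (paracompact_regular (fun z => ~ C z) b HC) as [N [D [HN [HD [Nb [HND HDC]]]]]].
    + intro Cb. exact (nWb (HCW b Cb)).
    + exists N, (fun z => ~ D z). split; [exact HN|]. split; [exact HD|].
      split; [exact Nb|]. split.
      * intros a Ca Da. exact (HDC a Da Ca).
      * intros z Nz nDz. exact (nDz (HND z Nz)).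
  - exists N, (fun z => ~ E z). split; [exact HN|]. split; [apply closed_compl, HE|].
    split; [exact HA|]. split.
    + intros z Nz Ez. exact (Hd z Nz Ez).
    + intros z nE. apply NNPP. intro nW. exact (nE (HB z nW)).
Qed.

(* Each member of a locally finite refinement has its closure inside some [P j]; the union of
   the closures assigned to [j] is closed by local finiteness. *)
Lemma paracompact_shrinking (J : Type) (P : J -> Y -> Prop) :
  (forall j, is_open Y (P j)) -> (forall x, exists j, P j x) ->
  exists C : J -> Y -> Prop, (forall j, is_closed Y (C j)) /\
    (forall j z, C j z -> P j z) /\ (forall z, exists j, C j z).
Proof.
  intros HPo HPcov.
  set (T := {t : (Y -> Prop) * (Y -> Prop) * J | is_open Y (fst (fst t)) /\
          is_closed Y (snd (fst t)) /\ (forall z, fst (fst t) z -> snd (fst t) z) /\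
          (forall z, snd (fst t) z -> P (snd t) z)}).
  destruct (proj2 HY T (fun t => fst (fst (proj1_sig t)))) as [K [Q [HQo [HQc [HQr HQl]]]]].
  { intro t. exact (proj1 (proj2_sig t)). }
  { intro x. destruct (HPcov x) as [j Pj].
    destruct (paracompact_regular (P j) x (HPo j) Pj) as [N [D [HN [HD [Nx HNDP]]]]].
    exists (exist _ (N, D, j) (conj HN (conj HD HNDP))). exact Nx. }
  destruct (choice_fun _ HQr) as [tau Htau].
  exists (fun j z => exists k, snd (proj1_sig (tau k)) = j /\ closure Y (Q k) z).
  split; [|split].
  - intro j. apply locally_finite_Union_closed.
    + intro k. apply closed_if, closure_closed.
    + intro y. destruct (HQl y) as [W [HW [Wy [l Hl]]]]. exists W.
      split; [exact HW|]. split; [exact Wy|]. exists l.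
      intros k [z [Wz [_ Hz]]]. apply Hl. exact (Hz W HW Wz).
  - intros j z [k [<- Hz]].
    destruct (proj2_sig (tau k)) as [_ [HD [HND HDP]]].
    apply HDP. revert z Hz. apply closure_min; [exact HD|].
    intros w Qw. apply HND, Htau, Qw.
  - intro z. destruct (HQc z) as [k Hk]. exists (snd (proj1_sig (tau k))), k.
    split; [reflexivity | apply subset_closure, Hk].
Qed.

End Paracompact.

(** * Suprema and real-valued continuity *)

Definition lubf (E : R -> Prop) : R := epsilon (inhabits 0) (is_lub E).

Lemma lubf_is_lub (E : R -> Prop) c :
  (exists s, E s) -> (forall s, E s -> s <= c) -> is_lub E (lubf E).
Proof.
  intros Hne Hb. unfold lubf. apply epsilon_spec.
  destruct (completeness E) as [m Hm]; [exists c; exact Hb | exact Hne | exists m; exact Hm].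
Qed.

Lemma lub_gt (E : R -> Prop) m c : is_lub E m -> c < m -> exists s, E s /\ c < s.
Proof.
  intros [_ Hl] Hc. apply NNPP. intro Hn. assert (m <= c); [|lra].
  apply Hl. intros s Es. apply Rnot_lt_le. intro. apply Hn. exists s. auto.
Qed.

Lemma Rabs_lt_between a b r : Rabs (a - b) < r <-> a - r < b < a + r.
Proof. unfold Rabs. destruct (Rcase_abs (a - b)); split; intro; lra. Qed.

Lemma metric_open_Rball (a r : R) : metric_open (fun u v => Rabs (u - v)) (fun t => Rabs (a - t) < r).
Proof.
  intros t Ht. exists (r - Rabs (a - t)). split; [lra|].
  intros u Hu. pose proof (Rabs_triang (a - t) (t - u)).
  replace (a - t + (t - u)) with (a - u) in H by ring. lra.
Qed.

Section RealContinuity.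
Variable Y : TopSpace.

Lemma rcontinuous_intro (e : Y -> R) :
  (forall y r, 0 < r -> exists N, is_open Y N /\ N y /\ forall z, N z -> e y - r < e z < e y + r) ->
  rcontinuous Y e.
Proof.
  intros He U HU. apply open_local. intros y Uy.
  destruct (HU (e y) Uy) as [r [Hr Hball]]. destruct (He y r Hr) as [N [HN [Ny HNz]]].
  exists N. split; [exact HN|]. split; [exact Ny|].
  intros z Nz. apply Hball, Rabs_lt_between, HNz, Nz.
Qed.

Lemma rcontinuous_ball (e : Y -> R) (a r : R) :
  rcontinuous Y e -> is_open Y (fun z => Rabs (a - e z) < r).
Proof. intro He. exact (He _ (metric_open_Rball a r)). Qed.

Lemma rcontinuous_scale (a : R) (e : Y -> R) :
  0 < a -> rcontinuous Y e -> rcontinuous Y (fun y => a * e y).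
Proof.
  intros Ha He. apply rcontinuous_intro. intros y r Hr.
  exists (fun z => Rabs (e y - e z) < r / a). split; [apply rcontinuous_ball, He|].
  split; [rewrite Rminus_diag, Rabs_R0; apply Rdiv_lt_0_compat; lra|].
  intros z Hz. apply Rabs_lt_between in Hz.
  assert (Har : a * (r / a) = r) by (field; lra). nra.
Qed.

End RealContinuity.

(** * Urysohn's lemma *)

Definition dyadic (n j : nat) : R := INR j / 2 ^ n.

Lemma dyadic_nonneg n j : 0 <= dyadic n j.
Proof.
  unfold dyadic, Rdiv. apply Rmult_le_pos; [apply pos_INR|].
  left; apply Rinv_0_lt_compat, pow_lt; lra.
Qed.

Lemma dyadic_le_iff n j m i : dyadic n j <= dyadic m i <-> (2 ^ m * j <= 2 ^ n * i)%nat.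
Proof.
  unfold dyadic. pose proof (pow_lt 2 n ltac:(lra)). pose proof (pow_lt 2 m ltac:(lra)).
  split; intro Hle.
  - apply INR_le. rewrite !mult_INR, !pow_INR. replace (INR 2) with 2 by (simpl; lra).
    apply (Rmult_le_compat_r (2 ^ n * 2 ^ m)) in Hle; [|nra].
    replace (INR j / 2 ^ n * (2 ^ n * 2 ^ m)) with (2 ^ m * INR j) in Hle by (field; lra).
    replace (INR i / 2 ^ m * (2 ^ n * 2 ^ m)) with (2 ^ n * INR i) in Hle by (field; lra).
    exact Hle.
  - apply le_INR in Hle. rewrite !mult_INR, !pow_INR in Hle.
    replace (INR 2) with 2 in Hle by (simpl; lra).
    apply (Rmult_le_reg_r (2 ^ n * 2 ^ m)); [nra|].
    replace (INR j / 2 ^ n * (2 ^ n * 2 ^ m)) with (2 ^ m * INR j) by (field; lra).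
    replace (INR i / 2 ^ m * (2 ^ n * 2 ^ m)) with (2 ^ n * INR i) by (field; lra).
    exact Hle.
Qed.

Lemma dyadic_lt n j m i : dyadic n j < dyadic m i -> (2 ^ m * j < 2 ^ n * i)%nat.
Proof.
  intro Hlt. apply Nat.nle_gt. intro Hle.
  apply (proj2 (dyadic_le_iff m i n j)) in Hle. lra.
Qed.

Lemma dyadic_le_1 n j : (j <= 2 ^ n)%nat -> dyadic n j <= 1.
Proof.
  intro Hj. replace 1 with (dyadic 0 1) by (unfold dyadic; simpl; lra).
  apply dyadic_le_iff. simpl. lia.
Qed.

Lemma INR_lt_pow2 (N : nat) : INR N < 2 ^ N.
Proof.
  induction N as [|N IH]; [simpl; lra|]. rewrite S_INR. simpl (2 ^ S N).
  assert (1 <= 2 ^ N) by (apply pow_R1_Rle; lra). lra.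
Qed.

(* Take [2 ^ N > 1 / (y - x)] and [j = floor (x 2 ^ N) + 1]. *)
Lemma dyadic_dense (x y : R) : 0 <= x -> x < y -> y <= 1 ->
  exists n j, (j <= 2 ^ n)%nat /\ x < dyadic n j < y.
Proof.
  intros Hx Hxy Hy.
  destruct (archimed (1 / (y - x))) as [Hz _].
  assert (Hpos : 0 < 1 / (y - x)) by (apply Rdiv_lt_0_compat; lra).
  assert (Hz0 : (0 <= up (1 / (y - x)))%Z) by (apply le_IZR; lra).
  set (N := Z.to_nat (up (1 / (y - x)))).
  assert (HN : INR N = IZR (up (1 / (y - x)))) by (unfold N; rewrite INR_IZR_INZ, Z2Nat.id; auto).
  assert (HP : 0 < 2 ^ N) by (apply pow_lt; lra).
  assert (Hstep : 1 / 2 ^ N < y - x).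
  { pose proof (INR_lt_pow2 N).
    apply (Rmult_lt_reg_r (2 ^ N * (1 / (y - x)))); [nra|].
    replace (1 / 2 ^ N * (2 ^ N * (1 / (y - x)))) with (1 / (y - x)) by (field; lra).
    replace ((y - x) * (2 ^ N * (1 / (y - x)))) with (2 ^ N) by (field; lra). lra. }
  destruct (archimed (x * 2 ^ N)) as [Hw1 Hw2].
  assert (Hw0 : (0 <= up (x * 2 ^ N))%Z)
    by (apply le_IZR; assert (0 <= x * 2 ^ N) by (apply Rmult_le_pos; lra); lra).
  set (j := Z.to_nat (up (x * 2 ^ N))).
  assert (Hj : INR j = IZR (up (x * 2 ^ N))) by (unfold j; rewrite INR_IZR_INZ, Z2Nat.id; auto).
  assert (E1 : x < dyadic N j).
  { unfold dyadic. apply (Rmult_lt_reg_r (2 ^ N)); [exact HP|].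
    replace (INR j / 2 ^ N * 2 ^ N) with (INR j) by (field; lra). lra. }
  assert (E2 : dyadic N j < y).
  { unfold dyadic. assert (INR j / 2 ^ N <= x + 1 / 2 ^ N); [|lra].
    apply (Rmult_le_reg_r (2 ^ N)); [exact HP|].
    replace (INR j / 2 ^ N * 2 ^ N) with (INR j) by (field; lra).
    replace ((x + 1 / 2 ^ N) * 2 ^ N) with (x * 2 ^ N + 1) by (field; lra). lra. }
  exists N, j. split; [|split; assumption].
  assert (Hle : dyadic N j <= dyadic 0 1) by (unfold dyadic at 2; simpl; lra).
  apply dyadic_le_iff in Hle. simpl in Hle. lia.
Qed.

Section Urysohn.
Variable Y : TopSpace.
Hypothesis HY : paracompact Y.

Definition interposes (C W : Y -> Prop) (p : (Y -> Prop) * (Y -> Prop)) : Prop :=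
  is_open Y (fst p) /\ is_closed Y (snd p) /\ (forall z, C z -> fst p z) /\
  (forall z, fst p z -> snd p z) /\ (forall z, snd p z -> W z).

Definition interpose (C W : Y -> Prop) : (Y -> Prop) * (Y -> Prop) :=
  epsilon (inhabits (C, C)) (interposes C W).

Lemma interpose_spec (C W : Y -> Prop) :
  is_closed Y C -> is_open Y W -> (forall z, C z -> W z) -> interposes C W (interpose C W).
Proof.
  intros HC HW HCW. unfold interpose. apply epsilon_spec.
  destruct (paracompact_normal Y HY C W HC HW HCW) as [U [D HUD]]. exists (U, D). exact HUD.
Qed.

Variables A W : Y -> Prop.
Hypotheses (HA : is_closed Y A) (HW : is_open Y W) (HAW : forall z, A z -> W z).

(* [level n j] is the pair (open set, closed set) attached to the dyadic [j / 2 ^ n]; the odd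
   indices of stage [n + 1] are interposed between the neighbouring pairs of stage [n]. *)
Fixpoint level (n j : nat) : (Y -> Prop) * (Y -> Prop) :=
  match n with
  | O => if Nat.eqb j 0 then interpose A W else (W, fun _ => True)
  | S n' => if Nat.even j then level n' (Nat.div2 j)
            else interpose (snd (level n' (Nat.div2 j))) (fst (level n' (S (Nat.div2 j))))
  end.

Lemma level_S n j : level (S n) j =
  if Nat.even j then level n (Nat.div2 j)
  else interpose (snd (level n (Nat.div2 j))) (fst (level n (S (Nat.div2 j)))).
Proof. reflexivity. Qed.

Lemma level_double n q : level (S n) (2 * q) = level n q.
Proof. rewrite level_S, Nat.even_even, Nat.div2_double. reflexivity. Qed.

Lemma level_succ_double n q :
  level (S n) (S (2 * q)) = interpose (snd (level n q)) (fst (level n (S q))).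
Proof.
  rewrite level_S. replace (S (2 * q)) with (2 * q + 1)%nat by lia.
  rewrite Nat.even_odd. replace (2 * q + 1)%nat with (S (2 * q)) by lia.
  rewrite Nat.div2_succ_double. reflexivity.
Qed.

Lemma level_lift n p j : level (n + p) (2 ^ p * j) = level n j.
Proof.
  induction p as [|p IH].
  - rewrite Nat.add_0_r. simpl. rewrite Nat.add_0_r. reflexivity.
  - rewrite Nat.add_succ_r. replace (2 ^ S p * j)%nat with (2 * (2 ^ p * j))%nat
      by (simpl; lia). rewrite level_double. exact IH.
Qed.

Definition nested_levels (n : nat) : Prop :=
  (forall j, (j <= 2 ^ n)%nat -> is_open Y (fst (level n j)) /\
     is_closed Y (snd (level n j)) /\
     (forall z, fst (level n j) z -> snd (level n j) z) /\
     (forall z, fst (level n j) z -> W z)) /\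
  (forall j, (j < 2 ^ n)%nat -> forall z, snd (level n j) z -> fst (level n (S j)) z) /\
  (forall z, A z -> fst (level n 0) z) /\
  level n (2 ^ n) = (W, fun _ => True).

Lemma nested_levels_all n : nested_levels n.
Proof.
  induction n as [|n [I1 [I2 [I3 I4]]]].
  - pose proof (interpose_spec A W HA HW HAW) as [S1 [S2 [S3 [S4 S5]]]].
    split; [|split; [|split]].
    + intros j Hj. simpl in Hj. destruct j as [|[|j]]; simpl; [|split; [exact HW|]|lia].
      * split; [exact S1|]. split; [exact S2|]. split; [exact S4|]. intros z Hz; auto.
      * split; [apply closed_full|]. split; auto.
    + intros j Hj. simpl in Hj. assert (j = 0%nat) by lia. subst j. exact S5.
    + exact S3.
    + reflexivity.
  - assert (Hodd : forall q, (q < 2 ^ n)%nat ->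
        interposes (snd (level n q)) (fst (level n (S q))) (level (S n) (S (2 * q)))).
    { intros q Hq. rewrite level_succ_double. apply interpose_spec.
      - apply (I1 q); lia.
      - apply (I1 (S q)); lia.
      - apply I2; exact Hq. }
    assert (Hpow : (2 ^ S n = 2 * 2 ^ n)%nat) by reflexivity.
    split; [|split; [|split]].
    + intros j Hj. destruct (Nat.Even_or_Odd j) as [[q ->] | [q ->]].
      * rewrite level_double. apply I1. lia.
      * replace (2 * q + 1)%nat with (S (2 * q)) by lia.
        destruct (Hodd q ltac:(lia)) as [S1 [S2 [S3 [S4 S5]]]].
        split; [exact S1|]. split; [exact S2|]. split; [exact S4|].
        intros z Hz. apply (I1 (S q)); [lia|]. apply S5, S4, Hz.
    + intros j Hj. destruct (Nat.Even_or_Odd j) as [[q ->] | [q ->]].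
      * rewrite level_double. exact (proj1 (proj2 (proj2 (Hodd q ltac:(lia))))).
      * replace (2 * q + 1)%nat with (S (2 * q)) by lia.
        replace (S (S (2 * q))) with (2 * S q)%nat by lia. rewrite level_double.
        exact (proj2 (proj2 (proj2 (proj2 (Hodd q ltac:(lia)))))).
    + replace 0%nat with (2 * 0)%nat by lia. rewrite level_double. exact I3.
    + rewrite Hpow, level_double. exact I4.
Qed.

Lemma level_chain N a b : (a < b)%nat -> (b <= 2 ^ N)%nat ->
  forall z, snd (level N a) z -> fst (level N b) z.
Proof.
  destruct (nested_levels_all N) as [I1 [I2 _]].
  intro Hab. induction b as [|b IH]; [lia|]. intros Hb z Hz.
  apply I2; [lia|]. destruct (Nat.eq_dec a b) as [-> | Hne]; [exact Hz|].
  apply (I1 b); [lia|]. apply IH; [lia|lia|exact Hz].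
Qed.

Lemma level_open_le n j m i : (j <= 2 ^ n)%nat -> (i <= 2 ^ m)%nat ->
  dyadic n j <= dyadic m i -> forall z, fst (level n j) z -> snd (level m i) z.
Proof.
  intros Hj Hi Hle z Hz.
  rewrite <- (level_lift n m j) in Hz. rewrite <- (level_lift m n i), (Nat.add_comm m n).
  apply dyadic_le_iff in Hle.
  assert (Hb : (2 ^ n * i <= 2 ^ (n + m))%nat)
    by (rewrite Nat.pow_add_r; apply Nat.mul_le_mono_l; exact Hi).
  destruct (nested_levels_all (n + m)) as [I1 _].
  destruct (Nat.eq_dec (2 ^ m * j) (2 ^ n * i)) as [He | Hne].
  - rewrite <- He. apply (I1 _); [lia | exact Hz].
  - apply (I1 _ Hb). apply (level_chain (n + m) (2 ^ m * j)); [lia | exact Hb|].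
    apply (I1 _); [lia | exact Hz].
Qed.

Lemma level_closed_lt n j m i : (i <= 2 ^ m)%nat ->
  dyadic n j < dyadic m i -> forall z, snd (level n j) z -> fst (level m i) z.
Proof.
  intros Hi Hlt z Hz.
  rewrite <- (level_lift n m j) in Hz. rewrite <- (level_lift m n i), (Nat.add_comm m n).
  apply (level_chain (n + m) (2 ^ m * j)); [apply dyadic_lt, Hlt | | exact Hz].
  rewrite Nat.pow_add_r. apply Nat.mul_le_mono_l. exact Hi.
Qed.

Definition urysohn_values (y : Y) (s : R) : Prop :=
  s = 0 \/ exists n j, (j <= 2 ^ n)%nat /\ s = 1 - dyadic n j /\ fst (level n j) y.

Definition urysohn_fun (y : Y) : R := lubf (urysohn_values y).

Lemma urysohn_values_bound y s : urysohn_values y s -> 0 <= s <= 1.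
Proof.
  intros [-> | [n [j [Hj [-> _]]]]]; [lra|].
  pose proof (dyadic_nonneg n j). pose proof (dyadic_le_1 n j Hj). lra.
Qed.

Lemma urysohn_fun_lub y : is_lub (urysohn_values y) (urysohn_fun y).
Proof.
  apply (lubf_is_lub _ 1); [exists 0; left; reflexivity|].
  intros s Hs. apply (urysohn_values_bound y s Hs).
Qed.

Lemma urysohn_fun_ge y n j : (j <= 2 ^ n)%nat -> fst (level n j) y ->
  1 - dyadic n j <= urysohn_fun y.
Proof. intros Hj Hy. apply (urysohn_fun_lub y). right. exists n, j. auto. Qed.

Lemma urysohn_fun_range y : 0 <= urysohn_fun y <= 1.
Proof.
  split; [apply (urysohn_fun_lub y); left; reflexivity|].
  apply (urysohn_fun_lub y). intros s Hs. apply (urysohn_values_bound y s Hs).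
Qed.

Lemma urysohn_fun_lower y r : 0 < r ->
  exists N, is_open Y N /\ N y /\ forall z, N z -> urysohn_fun y - r < urysohn_fun z.
Proof.
  intro Hr. destruct (lub_gt _ _ (urysohn_fun y - r) (urysohn_fun_lub y)) as [s [Ts Hs]]; [lra|].
  destruct Ts as [-> | [n [j [Hj [-> Hy]]]]].
  - exists (fun _ => True). split; [apply open_full|]. split; [exact I|].
    intros z _. pose proof (urysohn_fun_range z). lra.
  - exists (fst (level n j)). split; [apply (proj1 (nested_levels_all n) j Hj)|].
    split; [exact Hy|]. intros z Hz. pose proof (urysohn_fun_ge z n j Hj Hz). lra.
Qed.

(* Between [1 - (urysohn_fun y + r)] and [1 - urysohn_fun y] pick dyadics [d < d']: outside the
   closed set of [d] the function is at most [1 - d], and [y] lies outside it because [y] is not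
   in the open set of [d']. *)
Lemma urysohn_fun_upper y r : 0 < r ->
  exists N, is_open Y N /\ N y /\ forall z, N z -> urysohn_fun z < urysohn_fun y + r.
Proof.
  intro Hr. pose proof (urysohn_fun_range y).
  destruct (Rlt_or_le 1 (urysohn_fun y + r)) as [Hb | Hb].
  { exists (fun _ => True). split; [apply open_full|]. split; [exact I|].
    intros z _. pose proof (urysohn_fun_range z). lra. }
  destruct (dyadic_dense (1 - (urysohn_fun y + r)) (1 - urysohn_fun y))
    as [n [j [Hj [H1 H2]]]]; [lra|lra|lra|].
  destruct (dyadic_dense (dyadic n j) (1 - urysohn_fun y)) as [m [i [Hi [H3 H4]]]];
    [apply dyadic_nonneg | exact H2 | lra |].
  exists (fun z => ~ snd (level n j) z).
  split; [exact (proj1 (proj2 (proj1 (nested_levels_all n) j Hj)))|]. split.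
  - intro Hy. pose proof (urysohn_fun_ge y m i Hi (level_closed_lt n j m i Hi H3 y Hy)). lra.
  - intros z Hz. assert (urysohn_fun z <= 1 - dyadic n j); [|lra].
    apply (urysohn_fun_lub z). intros s [-> | [n' [j' [Hj' [-> Hz']]]]]; [lra|].
    destruct (Rle_or_lt (dyadic n' j') (dyadic n j)) as [Hc | Hc]; [|lra].
    exfalso. exact (Hz (level_open_le n' j' n j Hj' Hj Hc z Hz')).
Qed.

Lemma urysohn : exists phi : Y -> R, rcontinuous Y phi /\ (forall y, 0 <= phi y <= 1) /\
    (forall y, A y -> phi y = 1) /\ (forall y, 0 < phi y -> W y).
Proof.
  exists urysohn_fun. split; [|split; [exact urysohn_fun_range | split]].
  - apply rcontinuous_intro. intros y r Hr.
    destruct (urysohn_fun_lower y r Hr) as [N1 [HN1 [N1y H1]]].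
    destruct (urysohn_fun_upper y r Hr) as [N2 [HN2 [N2y H2]]].
    exists (fun z => N1 z /\ N2 z). split; [apply open_inter; auto|].
    split; [auto|]. intros z [Hz1 Hz2]. auto.
  - intros y Ay. apply Rle_antisym; [apply urysohn_fun_range|].
    replace 1 with (1 - dyadic 0 0) by (unfold dyadic; simpl; lra).
    apply urysohn_fun_ge; [simpl; lia|]. apply (nested_levels_all 0), Ay.
  - intros y Hy. destruct (lub_gt _ _ 0 (urysohn_fun_lub y) Hy) as [s [Ts Hs]].
    destruct Ts as [-> | [n [j [Hj [-> Hyj]]]]]; [lra|].
    exact (proj2 (proj2 (proj2 (proj1 (nested_levels_all n) j Hj))) y Hyj).
Qed.

End Urysohn.

(** * A continuous radius below a cover *)

Section LocallyFiniteSup.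
Variables (Y : TopSpace) (K : Type) (phi : K -> Y -> R) (c : R).
Hypothesis phi_range : forall m y, 0 <= phi m y <= c.
Hypothesis phi_continuous : forall m, rcontinuous Y (phi m).
Hypothesis phi_locally_finite : forall y, exists Q, is_open Y Q /\ Q y /\
  exists l : list K, forall m, (exists z, Q z /\ 0 < phi m z) -> In m l.

Definition sup_family (y : Y) : R := lubf (fun s => s = 0 \/ exists m, s = phi m y).

Lemma sup_family_lub y : is_lub (fun s => s = 0 \/ exists m, s = phi m y) (sup_family y).
Proof.
  apply (lubf_is_lub _ (Rmax 0 c)); [exists 0; left; reflexivity|].
  intros s [-> | [m ->]]; [apply Rmax_l | eapply Rle_trans; [apply phi_range | apply Rmax_r]].
Qed.

Lemma sup_family_ge m y : phi m y <= sup_family y.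
Proof. apply (sup_family_lub y). right. exists m. reflexivity. Qed.

Lemma sup_family_nonneg y : 0 <= sup_family y.
Proof. apply (sup_family_lub y). left. reflexivity. Qed.

Lemma sup_family_le y : 0 <= c -> sup_family y <= c.
Proof. intro Hc. apply (sup_family_lub y). intros s [-> | [m ->]]; [exact Hc | apply phi_range]. Qed.

(* Near [y] only the finitely many [phi m] with [m] in [l] can be nonzero, and each of them is
   close to its value at [y]. *)
Lemma sup_family_continuous : rcontinuous Y sup_family.
Proof.
  apply rcontinuous_intro. intros y r Hr.
  destruct (phi_locally_finite y) as [Q [HQ [Qy [l Hsupp]]]].
  assert (Hl : forall m z, Q z -> ~ In m l -> phi m z = 0).
  { intros m z Qz Hm. destruct (proj1 (phi_range m z)) as [Hlt | Heq]; [|auto].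
    exfalso. apply Hm, Hsupp. exists z. auto. }
  exists (fun z => Q z /\ forall m, In m l -> Rabs (phi m y - phi m z) < r / 2). split; [|split].
  - apply open_inter; [exact HQ|]. apply open_Inter_list. intros m _.
    apply rcontinuous_ball, phi_continuous.
  - split; [exact Qy|]. intros m _. rewrite Rminus_diag, Rabs_R0. lra.
  - intros z [Qz Hz]. pose proof (sup_family_nonneg y). pose proof (sup_family_nonneg z). split.
    + destruct (lub_gt _ _ (sup_family y - r / 2) (sup_family_lub y))
        as [s [[-> | [m ->]] Hs]]; [lra | lra |].
      destruct (classic (In m l)) as [Hin | Hnin].
      * pose proof (proj1 (Rabs_lt_between _ _ _) (Hz m Hin)). pose proof (sup_family_ge m z). lra.
      * rewrite (Hl m y Qy Hnin) in Hs. lra.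
    + assert (sup_family z <= sup_family y + r / 2); [|lra].
      apply (sup_family_lub z). intros s [-> | [m ->]]; [lra|].
      destruct (classic (In m l)) as [Hin | Hnin].
      * pose proof (proj1 (Rabs_lt_between _ _ _) (Hz m Hin)). pose proof (sup_family_ge m y). lra.
      * rewrite (Hl m z Qz Hnin). lra.
Qed.

End LocallyFiniteSup.

Lemma paracompact_bump_family (Y : TopSpace) (J : Type) (P : J -> Y -> Prop) :
  paracompact Y -> (forall j, is_open Y (P j)) -> (forall y, exists j, P j y) ->
  exists phi : J -> Y -> R, (forall j, rcontinuous Y (phi j)) /\
    (forall j y, 0 <= phi j y <= 1) /\ (forall j y, 0 < phi j y -> P j y) /\
    (forall y, exists j, phi j y = 1).
Proof.
  intros HY HPo HPcov.
  destruct (paracompact_shrinking Y HY J P HPo HPcov) as [C [HCc [HCP HCcov]]].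
  assert (Hur : forall j, exists phi : Y -> R, rcontinuous Y phi /\ (forall y, 0 <= phi y <= 1) /\
              (forall y, C j y -> phi y = 1) /\ (forall y, 0 < phi y -> P j y))
    by (intro j; exact (urysohn Y HY (C j) (P j) (HCc j) (HPo j) (HCP j))).
  destruct (choice_fun _ Hur) as [phi Hphi].
  exists phi. split; [|split; [|split]].
  - intro j. apply Hphi.
  - intro j. apply Hphi.
  - intro j. apply Hphi.
  - intro y. destruct (HCcov y) as [j Hj]. exists j. apply Hphi, Hj.
Qed.

(* With bump functions [phi m] subordinate to a locally finite refinement of the given cover,
   the supremum of the [d m * phi m] is continuous and positive, and is below [d m] wherever it
   is nearly attained. *)
Lemma paracompact_continuous_radius (Y : TopSpace) (Good : (Y -> Prop) -> R -> Prop) :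
  paracompact Y ->
  (forall y, exists O d, is_open Y O /\ O y /\ 0 < d /\ Good O d) ->
  exists eps : Y -> R, rcontinuous Y eps /\ (forall y, 0 < eps y <= 1) /\
    forall y, exists O d, Good O d /\ O y /\ eps y <= d.
Proof.
  intros HY Hcov.
  set (I := {p : (Y -> Prop) * R | is_open Y (fst p) /\ 0 < snd p /\ Good (fst p) (snd p)}).
  destruct (proj2 HY I (fun i => fst (proj1_sig i))) as [J [P [HPo [HPcov [HPr HPl]]]]].
  { intro i. exact (proj1 (proj2_sig i)). }
  { intro y. destruct (Hcov y) as [O [d [HO [Oy HdG]]]].
    exists (exist _ (O, d) (conj HO HdG)). exact Oy. }
  destruct (choice_fun _ HPr) as [rho Hrho].
  destruct (paracompact_bump_family Y J P HY HPo HPcov) as [phi [Hphic [Hphi01 [HphiP Hphi1]]]].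
  set (d := fun m => Rmin (snd (proj1_sig (rho m))) 1 / 2).
  assert (Hd : forall m, 0 < d m <= 1 / 2 /\ 2 * d m <= snd (proj1_sig (rho m))).
  { intro m. unfold d. pose proof (proj1 (proj2 (proj2_sig (rho m)))).
    pose proof (Rmin_l (snd (proj1_sig (rho m))) 1). pose proof (Rmin_r (snd (proj1_sig (rho m))) 1).
    assert (0 < Rmin (snd (proj1_sig (rho m))) 1) by (apply Rmin_glb_lt; lra). lra. }
  set (w := fun m y => d m * phi m y).
  assert (Hw : forall m y, 0 <= w m y <= d m).
  { intros m y. unfold w. pose proof (Hphi01 m y). pose proof (Hd m). nra. }
  assert (Hw01 : forall m y, 0 <= w m y <= 1 / 2) by (intros m y; pose proof (Hw m y); pose proof (Hd m); lra).
  assert (Hwpos : forall m y, 0 < w m y -> P m y).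
  { intros m y Hy. apply HphiP. unfold w in Hy. pose proof (Hd m). pose proof (Hphi01 m y). nra. }
  assert (Hwlf : forall y, exists Q, is_open Y Q /\ Q y /\
                   exists l : list J, forall m, (exists z, Q z /\ 0 < w m z) -> In m l).
  { intro y. destruct (HPl y) as [Q [HQ [Qy [l Hl]]]]. exists Q. split; [exact HQ|].
    split; [exact Qy|]. exists l. intros m [z [Qz Hz]]. apply Hl. exists z. auto. }
  assert (Hpos : forall y, 0 < sup_family Y J w y).
  { intro y. destruct (Hphi1 y) as [m Hm]. pose proof (sup_family_ge Y J w (1 / 2) Hw01 m y).
    unfold w in *. rewrite Hm in *. pose proof (Hd m). lra. }
  exists (sup_family Y J w). split; [|split].
  - apply (sup_family_continuous Y J w (1 / 2) Hw01); [|exact Hwlf].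
    intro m. apply rcontinuous_scale; [apply Hd | apply Hphic].
  - intro y. split; [apply Hpos|]. pose proof (sup_family_le Y J w (1 / 2) Hw01 y). lra.
  - intro y. pose proof (Hpos y).
    destruct (lub_gt _ _ (sup_family Y J w y / 2) (sup_family_lub Y J w (1 / 2) Hw01 y))
      as [s [[-> | [m ->]] Hs]]; [lra | lra |].
    exists (fst (proj1_sig (rho m))), (snd (proj1_sig (rho m))). split; [|split].
    + exact (proj2 (proj2 (proj2_sig (rho m)))).
    + apply Hrho, Hwpos. lra.
    + pose proof (Hw m y). pose proof (Hd m). lra.
Qed.

(** * Uniform margins on fibres *)

Lemma closed_map_tube (X Y : TopSpace) (f : X -> Y) (W : X -> Prop) :
  closed_map X Y f -> is_open X W -> is_open Y (fun y => forall x, f x = y -> W x).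
Proof.
  intros Hf HW. apply (open_ext Y (fun y => ~ exists x, ~ W x /\ f x = y)).
  - intro y. split.
    + intros Hy x Hx. apply NNPP. intro nW. apply Hy. exists x. auto.
    + intros Hy [x [nW Hx]]. exact (nW (Hy x Hx)).
  - apply (Hf (fun x => ~ W x)), closed_compl, HW.
Qed.

Lemma list_min_pos {A : Type} (w : A -> R) (L : list A) :
  (forall a, In a L -> 0 < w a) -> exists d, 0 < d /\ forall a, In a L -> d <= w a.
Proof.
  induction L as [|b L IH]; intro Hp.
  - exists 1. split; [lra | intros a []].
  - destruct IH as [d [Hd HdL]]; [intros a Ha; apply Hp; right; exact Ha|].
    exists (Rmin (w b) d). split.
    + apply Rmin_glb_lt; [apply Hp; left; reflexivity | exact Hd].
    + intros a [<- | Ha]; [apply Rmin_l | eapply Rle_trans; [apply Rmin_r | apply HdL, Ha]].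
Qed.

Section FibreCover.
Variables (M : MetricSpace) (Z : M -> Prop) (I : Type) (V : I -> M -> Prop).
Hypotheses (HZ : mclosed M Z) (HV : forall i, mopen M (V i)).

Lemma mopen_ball (q : M) (r : R) : mopen M (fun p => Defs.dist M q p < r).
Proof.
  destruct (dist_metric M) as [_ [_ [_ Htri]]].
  intros p Hp. exists (r - Defs.dist M q p). split; [lra|].
  intros u Hu. pose proof (Htri q p u). lra.
Qed.

Lemma cover_radius (q : M) : (Z q -> exists i, V i q) ->
  exists rho, 0 < rho /\ forall p, Defs.dist M q p < 2 * rho -> Z p -> exists i, V i p.
Proof.
  intro Hq. destruct (classic (Z q)) as [Zq | nZq].
  - destruct (Hq Zq) as [i Hi]. destruct (HV i q Hi) as [r [Hr Hb]].
    exists (r / 2). split; [lra|]. intros p Hp _. exists i. apply Hb. lra.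
  - destruct (HZ q nZq) as [r [Hr Hb]].
    exists (r / 2). split; [lra|]. intros p Hp Zp. exfalso. apply (Hb p); [lra | exact Zp].
Qed.

(* Cover the compact fibre by finitely many balls [B (g x) rho] with [Z] covered on the doubled
   balls; the smallest [rho] is a uniform margin, valid over the tube of fibres inside the union. *)
Lemma fibre_cover_margin (X Y : TopSpace) (f : X -> Y) (g : X -> M) (y : Y) :
  mcontinuous X M g -> closed_map X Y f -> compact_subset X (fun x => f x = y) ->
  (forall x, f x = y -> Z (g x) -> exists i, V i (g x)) ->
  exists O d, is_open Y O /\ O y /\ 0 < d /\
    forall x p, O (f x) -> Z p -> Defs.dist M p (g x) < d -> exists i, V i p.
Proof.
  intros Hg Hf Hcomp Hcov. destruct (dist_metric M) as [_ [Heq [Hsym Htri]]].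
  set (Ix := {xr : X * R | f (fst xr) = y /\ 0 < snd xr /\
                forall p, Defs.dist M (g (fst xr)) p < 2 * snd xr -> Z p -> exists i, V i p}).
  set (ball := fun (i : Ix) x => Defs.dist M (g (fst (proj1_sig i))) (g x) < snd (proj1_sig i)).
  assert (Hball : forall i, is_open X (ball i)) by (intro i; exact (Hg _ (mopen_ball _ _))).
  destruct (Hcomp Ix ball Hball) as [L HL].
  { intros x Hx. destruct (cover_radius (g x) (Hcov x Hx)) as [rho [Hrho Hcv]].
    exists (exist _ (x, rho) (conj Hx (conj Hrho Hcv))). unfold ball; simpl.
    rewrite (proj2 (Heq (g x) (g x)) eq_refl). exact Hrho. }
  destruct (list_min_pos (fun i : Ix => snd (proj1_sig i)) L) as [d [Hd HdL]].
  { intros i _. exact (proj1 (proj2 (proj2_sig i))). }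
  exists (fun y' => forall x, f x = y' -> exists i, In i L /\ ball i x), d.
  split; [|split; [|split; [exact Hd|]]].
  - apply closed_map_tube; [exact Hf|]. apply open_Union. intro i. apply open_if, Hball.
  - intros x Hx. destruct (HL x Hx) as [i Hi]. exists i. exact Hi.
  - intros x p Ox Zp Hp. destruct (Ox x eq_refl) as [i [Hi Hb]].
    apply (proj2 (proj2 (proj2_sig i))); [|exact Zp].
    pose proof (Htri (g (fst (proj1_sig i))) (g x) p). rewrite (Hsym (g x) p) in *.
    pose proof (HdL i Hi). unfold ball in Hb. lra.
Qed.

End FibreCover.

Section Stability.
Variables (M : MetricSpace) (X Y : TopSpace) (f : X -> Y) (n : nat) (H : Y -> Prop)
  (Z : M -> Prop) (k : nat).

Definition Rnf_margin (g : X -> M) (y : Y) (d : R) : Prop :=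
  exists (I : Type) (V : I -> M -> Prop), (forall i, mopen M (V i)) /\
    (forall x, f x = y -> forall p, Z p -> Defs.dist M p (g x) < d -> exists i, V i p) /\
    (forall i a b, V i a -> V i b -> Defs.dist M a b <= 1 / INR k) /\ order_le V (fun _ => True) n.

Lemma Rnf_local_margin (g : X -> M) (y : Y) :
  mclosed M Z -> perfect_map X Y f -> Rnf X Y M f n H Z k g -> H y ->
  exists O d, is_open Y O /\ O y /\ 0 < d /\ forall y', O y' -> Rnf_margin g y' d.
Proof.
  intros HZ [_ [Hf Hcomp]] [Hg HgR] Hy.
  destruct (HgR y Hy) as [I [V [HV [Hcov HVmesh]]]].
  destruct (fibre_cover_margin M Z I V HZ HV X Y f g y Hg Hf (Hcomp y) Hcov)
    as [O [d [HO [Oy [Hd HOd]]]]].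
  exists O, d. split; [exact HO|]. split; [exact Oy|]. split; [exact Hd|].
  intros y' Oy'. exists I, V. split; [exact HV|]. split; [|exact HVmesh].
  intros x <- p Zp Hp. exact (HOd x p Oy' Zp Hp).
Qed.

Lemma Rnf_of_margin (g h : X -> M) :
  mcontinuous X M h ->
  (forall y, H y -> exists d, Rnf_margin g y d /\ forall x, f x = y -> Defs.dist M (h x) (g x) < d) ->
  Rnf X Y M f n H Z k h.
Proof.
  intros Hh Hmargin. split; [exact Hh|]. intros y Hy.
  destruct (Hmargin y Hy) as [d [[I [V [HV [Hcov HVmesh]]]] Hhg]].
  exists I, V. split; [exact HV|]. split; [|exact HVmesh].
  intros x Hx Zh. exact (Hcov x Hx (h x) Zh (Hhg x Hx)).
Qed.

End Stability.

Theorem lemma2p3 (M : MetricSpace) (X Y : TopSpace) (Z : M -> Prop) (n : nat)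
    (f : X -> Y) (H : Y -> Prop) (k : nat) :
  complete M -> mclosed M Z ->
  paracompact X -> paracompact Y ->
  perfect_map X Y f -> (forall y, exists x, f x = y) -> dim_map_le X Y f n ->
  is_closed Y H -> (1 <= k)%nat ->
  ((metrizable X /\ metrizable Y) \/ (forall p, Z p)) ->
  sl_open X M (Rnf X Y M f n H Z k).
Proof.
  intros _ HZ _ HY Hf _ _ HH _ _ g Hg _.
  set (Good := fun O d => forall y, O y -> H y -> Rnf_margin M X Y f n Z k g y d).
  destruct (paracompact_continuous_radius Y Good HY) as [eps [Heps [Hpos Hrad]]].
  { intro y. destruct (classic (H y)) as [Hy | nHy].
    - destruct (Rnf_local_margin M X Y f n H Z k g y HZ Hf Hg Hy) as [O [d [HO [Oy [Hd HOd]]]]].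
      exists O, d. repeat split; auto. intros y' Oy' _. apply HOd, Oy'.
    - exists (fun z => ~ H z), 1. repeat split; [exact HH | exact nHy | lra |].
      intros y' Hy' Hy''. contradiction. }
  exists (fun x => eps (f x)). split; [|split].
  - intros U HU. exact (proj1 Hf _ (Heps U HU)).
  - intro x. apply Hpos.
  - intros h Hh Hhg. apply (Rnf_of_margin M X Y f n H Z k g h Hh). intros y Hy.
    destruct (Hrad y) as [O [d [HG [Oy Hle]]]]. exists d. split; [exact (HG y Oy Hy)|].
    intros x <-. specialize (Hhg x). lra.
Qed.
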